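(* Let $n,d\in\mathbb{N}$, $y_1,\dots,y_n\in\{-1,+1\}$, $z_1,\dots,z_n$ in a real Hilbert space $\mathcal{Z}$, $\tilde x_1,\dots,\tilde x_n\in\mathbb{R}^d$, $C>0$, $\gamma\ge0$, and let $(w^\star,b^\star,\tilde w^\star,\tilde b^\star,\alpha^\star,\beta^\star)$ be a primal-dual optimal point of the SVM+ problem with correcting vectors $\tilde z_i=\tilde x_i$ (Euclidean inner product). Let $h_i=[1-y_i(\langle w^\star,z_i\rangle+b^\star)]_+$ and suppose $$\frac{\sum_i(\alpha^\star_i+\beta^\star_i)h_i}{\sum_i(\alpha^\star_i+\beta^\star_i)}=\frac1n\sum_ih_i .$$ Then $\langle\tilde w^\star,\tilde x_i\rangle+\tilde b^\star=h_i$ for all $i=1,\dots,n$. Furthermore: (1) if $\gamma>0$, then $\tilde w^\star=0$ and $\tilde b^\star=h_i$ for all $i$ (so the loss $h_i$ is the same at all data points); (2) if $\gamma=0$, then $\tilde X\tilde\alpha^\star=0$, where $\tilde X=[\tilde x_1\cdots\tilde x_n]\in\mathbb{R}^{d\times n}$ and $\tilde\alpha^\star=\alpha^\star+\beta^\star-C\mathbf 1$; if additionally $\operatorname{rank}(\tilde X)=n$, then $\alpha^\star_i+\beta^\star_i=C$ for all $i$, every vector of $\mathbb{R}^n$ is of the form $(\langle\tilde w,\tilde x_i\rangle+\tilde b)_{i=1}^n$ for some $\tilde w\in\mathbb{R}^d,\tilde b\in\mathbb{R}$, and $(w^\star,b^\star,\xi^\star,\alpha^\star,\beta^\star)$ with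 $\xi^\star_i=\langle\tilde w^\star,\tilde x_i\rangle+\tilde b^\star$ is a primal-dual optimal point of the standard soft-margin SVM with parameter $C$.
   Context: SVM+ problem: $\min_{w\in\mathcal Z,b\in\mathbb R,\tilde w\in\mathbb R^d,\tilde b\in\mathbb R}\frac12(\|w\|^2+\gamma\|\tilde w\|^2)+C\sum_i(\langle\tilde w,\tilde x_i\rangle+\tilde b)$ subject to $y_i(\langle w,z_i\rangle+b)\ge1-(\langle\tilde w,\tilde x_i\rangle+\tilde b)$ and $\langle\tilde w,\tilde x_i\rangle+\tilde b\ge0$; primal-dual optimal points satisfy the KKT conditions $w=\sum_i\alpha_iy_iz_i$, $\sum_i\alpha_iy_i=0$, $\sum_i(\alpha_i+\beta_i-C)\tilde x_i=\gamma\tilde w$, $\sum_i(\alpha_i+\beta_i-C)=0$, $\alpha_i[\langle\tilde w,\tilde x_i\rangle+\tilde b-1+y_i(\langle w,z_i\rangle+b)]=0$, $\beta_i[\langle\tilde w,\tilde x_i\rangle+\tilde b]=0$, primal feasibility, $\alpha,\beta\ge0$. The standard soft-margin SVM with parameter $C$ is $\min_{w,b,\xi}\frac12\|w\|^2+C\sum_i\xi_i$ subject to $y_i(\langle w,z_i\rangle+b)\ge1-\xi_i$, $\xi_i\ge0$; its primal-dual optimal points $(w,b,\xi,\alpha,\beta)$ satisfy $w=\sum_i\alpha_iy_iz_i$, $\sum_i\alpha_iy_i=0$, $\alpha_i+\beta_i=C$, $\alpha_i[\xi_i-1+y_i(\langle w,z_i\rangle+b)]=0$, $\beta_i\xi_i=0$,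 primal feasibility, $\alpha,\beta\ge0$. $\mathbf 1$ is the all-ones vector. *)

From HB Require Import structures.
From mathcomp Require Import all_boot all_order all_algebra.
From mathcomp Require Import all_classical all_reals all_analysis.
Set Implicit Arguments. Unset Strict Implicit. Unset Printing Implicit Defensive.
Import Order.TTheory GRing.Theory Num.Theory.
Import numFieldNormedType.Exports.
Local Open Scope ring_scope.

(* A real Hilbert space is modelled as a complete normed space Z over R whose
   norm comes from a symmetric bilinear form [ip]. *)
Definition is_inner_product (R : realType) (Z : normedModType R)
  (ip : Z -> Z -> R) : Prop :=
  [/\ (forall x y, ip x y = ip y x),
      (forall (a : R) (x y u : Z), ip (a *: x + y) u = a * ip x u + ip y u)
    & (forall x, ip x x = `|x| ^+ 2)].

Definition dotv (R : realType) (d : nat) (u v : 'cV[R]_d) : R :=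
  \sum_(k < d) u k 0 * v k 0.

Definition lagrangian (R : realType) (X : Type) (J : finType)
  (f : X -> R) (g : J -> X -> R) (x : X) (lam : J -> R) : R :=
  f x + \sum_(j : J) lam j * g j x.

Definition feasible (R : realType) (X : Type) (J : finType)
  (g : J -> X -> R) (x : X) : Prop := forall j, g j x <= 0.

(* (x, lam) is a primal-dual optimal point:
   x is primal optimal, lam is dual optimal (maximizes the dual function
   D(mu) = inf_x' L(x', mu) over mu >= 0), and there is zero duality gap
   (D(lam) = f x, i.e. f x is the infimum of L(., lam)).
   "D(mu) <= D(lam)" is expressed as: every lower bound of L(.,mu) is a lower
   bound of L(.,lam) (this handles D = -oo without extended reals). *)
Definition primal_dual_optimal (R : realType) (X : Type) (J : finType)
  (f : X -> R) (g : J -> X -> R) (x : X) (lam : J -> R) : Prop :=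
  [/\ feasible g x,
      (forall x', feasible g x' -> f x <= f x'),
      (forall j, 0 <= lam j),
      (forall mu : J -> R, (forall j, 0 <= mu j) ->
         forall t : R, (forall x', t <= lagrangian f g x' mu) ->
                       (forall x', t <= lagrangian f g x' lam))
    & ((forall x', f x <= lagrangian f g x' lam) /\
       (forall t : R, (forall x', t <= lagrangian f g x' lam) -> t <= f x))].

Definition svmp_obj (R : realType) (Z : normedModType R) (ip : Z -> Z -> R)
  (n d : nat) (xt : 'I_n -> 'cV[R]_d) (C gamma : R)
  (p : Z * R * 'cV[R]_d * R) : R :=
  let '(w, b, wt, bt) := p in
  2^-1 * (ip w w + gamma * dotv wt wt) + C * \sum_(i < n) (dotv wt (xt i) + bt).

Definition svmp_cons (R : realType) (Z : normedModType R) (ip : Z -> Z -> R)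
  (n d : nat) (y : 'I_n -> R) (z : 'I_n -> Z) (xt : 'I_n -> 'cV[R]_d)
  (j : 'I_n + 'I_n) (p : Z * R * 'cV[R]_d * R) : R :=
  let '(w, b, wt, bt) := p in
  match j with
  | inl i => 1 - (dotv wt (xt i) + bt) - y i * (ip w (z i) + b)
  | inr i => - (dotv wt (xt i) + bt)
  end.

Definition svm_obj (R : realType) (Z : normedModType R) (ip : Z -> Z -> R)
  (n : nat) (C : R) (p : Z * R * ('I_n -> R)) : R :=
  let '(w, b, xi) := p in 2^-1 * ip w w + C * \sum_(i < n) xi i.

Definition svm_cons (R : realType) (Z : normedModType R) (ip : Z -> Z -> R)
  (n : nat) (y : 'I_n -> R) (z : 'I_n -> Z)
  (j : 'I_n + 'I_n) (p : Z * R * ('I_n -> R)) : R :=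
  let '(w, b, xi) := p in
  match j with
  | inl i => 1 - xi i - y i * (ip w (z i) + b)
  | inr i => - xi i
  end.

Definition mults (R : realType) (n : nat) (alpha beta : 'I_n -> R)
  (j : 'I_n + 'I_n) : R :=
  match j with inl i => alpha i | inr i => beta i end.

Definition Xmat (R : realType) (n d : nat) (xt : 'I_n -> 'cV[R]_d) : 'M[R]_(d, n) :=
  \matrix_(k < d, i < n) xt i k 0.

From HB Require Import structures.
From mathcomp Require Import all_boot all_order all_algebra.
From mathcomp Require Import all_classical all_reals all_analysis.
From mathcomp Require Import ring lra.
Import Order.TTheory GRing.Theory Num.Theory.
Import numFieldNormedType.Exports.
Local Open Scope ring_scope.

(* Write s_i = <wt, xt_i> + bt.  Feasibility gives h_i <= s_i, and complementary
   slackness gives (alpha_i + beta_i) (s_i - h_i) = 0.  Stationarity of the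
   Lagrangian in (wt, bt) gives sum_i (alpha_i + beta_i) = n C and
   gamma |wt|^2 = sum_i (alpha_i + beta_i - C) s_i.  The mean hypothesis turns
   the latter into gamma |wt|^2 + C sum_i (s_i - h_i) = 0, a sum of nonnegative
   terms, whence s = h and gamma |wt|^2 = 0.  For gamma = 0, stationarity in wt
   reads Xt (alpha + beta - C 1) = 0; full column rank then forces
   alpha + beta = C 1 and makes (wt, bt) |-> s onto, so that the substitution
   xi = s maps SVM+ onto the soft-margin SVM, objective and constraints alike. *)

Section DotProduct.
Context {R : realType} {d : nat}.
Implicit Types (u v x : 'cV[R]_d) (a : R).

Lemma dotvC u v : dotv u v = dotv v u.
Proof. by apply: eq_bigr => k _; rewrite mulrC. Qed.

Lemma dotvDl u v x : dotv (u + v) x = dotv u x + dotv v x.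
Proof. by rewrite /dotv -big_split; apply: eq_bigr => k _; rewrite mxE mulrDl. Qed.

Lemma dotvZl a u x : dotv (a *: u) x = a * dotv u x.
Proof. by rewrite /dotv mulr_sumr; apply: eq_bigr => k _; rewrite mxE mulrA. Qed.

Lemma dotvDr u v x : dotv x (u + v) = dotv x u + dotv x v.
Proof. by rewrite dotvC dotvDl !(dotvC x). Qed.

Lemma dotvZr a u x : dotv x (a *: u) = a * dotv x u.
Proof. by rewrite dotvC dotvZl dotvC. Qed.

Lemma dotv0l x : dotv 0 x = 0.
Proof. by rewrite -(scale0r 0) dotvZl mul0r. Qed.

Lemma dotv0r x : dotv x 0 = 0.
Proof. by rewrite dotvC dotv0l. Qed.

Lemma dotv_delta k x : dotv (delta_mx k 0) x = x k 0.
Proof.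
rewrite /dotv (bigD1 k) //= big1 ?addr0 => [|l /negbTE nlk].
  by rewrite mxE !eqxx mul1r.
by rewrite mxE nlk mul0r.
Qed.

Lemma dotv_ge0 u : 0 <= dotv u u.
Proof. by apply: sumr_ge0 => k _; rewrite -expr2 sqr_ge0. Qed.

Lemma dotv_eq0 u : dotv u u = 0 -> u = 0.
Proof.
move=> u0; apply/matrixP => k j; rewrite (ord1 j) mxE.
have sq_ge0 l : xpredT l -> 0 <= u l 0 * u l 0 by rewrite -expr2 sqr_ge0.
have /eqP := psumr_eq0P sq_ge0 u0 (isT : xpredT k).
by rewrite mulf_eq0 orbb => /eqP.
Qed.

End DotProduct.

Lemma dotv_Xmat {R : realType} {n d : nat} (xt : 'I_n -> 'cV[R]_d)
    (u : 'cV[R]_d) i :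
  dotv u (xt i) = (u^T *m Xmat xt) 0 i.
Proof. by rewrite mxE; apply: eq_bigr => k _; rewrite !mxE. Qed.

Lemma mulmx_rank_col_eq0 {F : fieldType} {m n : nat} {A : 'M[F]_(m, n)}
    {c : 'cV[F]_n} :
  \rank A = n -> A *m c = 0 -> c = 0.
Proof.
move=> rankA Ac0; have freeAT : row_free A^T by rewrite /row_free mxrank_tr rankA.
apply: trmx_inj; apply: (row_free_inj freeAT).
by rewrite -trmx_mul Ac0 !trmx0 mul0mx.
Qed.

Lemma row_full_onto {F : fieldType} {m n : nat} {A : 'M[F]_(m, n)} :
  row_full A -> forall v : 'rV[F]_n, exists u : 'rV[F]_m, u *m A = v.
Proof. by move=> fullA v; exists (v *m pinvmx A); exact/mulmxKpV/submx_full. Qed.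

Lemma Xmat_affine_onto {R : realType} {n d : nat} {xt : 'I_n -> 'cV[R]_d} :
  \rank (Xmat xt) = n ->
  forall v : 'cV[R]_n, exists (wt : 'cV[R]_d) (bt : R),
    forall i, v i 0 = dotv wt (xt i) + bt.
Proof.
move=> rankX v; have fullX : row_full (Xmat xt) by rewrite /row_full rankX.
have [u uX] := row_full_onto fullX v^T.
by exists u^T, 0 => i; rewrite addr0 dotv_Xmat trmxK uX mxE.
Qed.

Lemma weighted_mean_eq_mean {R : realFieldType} {n : nat} {a h : 'I_n -> R}
    {C : R} :
  C != 0 -> \sum_(i < n) a i = C * n%:R ->
  (\sum_(i < n) a i * h i) / (\sum_(i < n) a i) = n%:R^-1 * \sum_(i < n) h i ->
  \sum_(i < n) a i * h i = C * \sum_(i < n) h i.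
Proof.
move=> C0; case: n a h => [|n] a h suma; first by move=> _; rewrite !big_ord0 mulr0.
have Cn0 : C * n.+1%:R != 0 by rewrite mulf_neq0 // pnatr_eq0.
rewrite suma => /(congr1 (fun r => r * (C * n.+1%:R))) /=; rewrite divfK // => ->.
by field; rewrite addrC natr1 pnatr_eq0.
Qed.

Lemma linear_coef_eq0_of_quadratic_ge0 {R : realFieldType} {a c : R} :
  (forall t, 0 <= t * a + t ^+ 2 * c) -> a = 0.
Proof.
move=> quad_ge0; pose k := `|c| + 1.
have k_gt0 : 0 < k by rewrite ltr_pwDr.
have c_lt_k : c < k by rewrite (le_lt_trans (ler_norm c)) // ltrDl.
pose t := - a / (2 * k).
have aE : a = - (2 * k * t) by rewrite /t; field; rewrite gt_eqF.
have := quad_ge0 t; rewrite aE => quad_t.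
have t2_le0 : t ^+ 2 <= 0 by nra.
have t0 : t = 0 by apply/eqP; rewrite -sqrf_eq0 eq_le t2_le0 sqr_ge0.
by rewrite t0 mulr0 oppr0.
Qed.

Section Lagrangian.
Context {R : realType} {X : Type} {J : finType}.
Context {f : X -> R} {g : J -> X -> R} {x : X} {lam : J -> R}.
Hypothesis opt : primal_dual_optimal f g x lam.

Lemma primal_dual_optimal_slack j : lam j * g j x = 0.
Proof.
case: opt => feas _ lam_ge0 _ [fx_le_L _].
have term_le0 k : lam k * g k x <= 0 := mulr_ge0_le0 (lam_ge0 k) (feas k).
have sumN0 : \sum_k - (lam k * g k x) = 0.
  apply/le_anti; rewrite sumr_ge0 ?andbT => [|k _]; last by rewrite oppr_ge0.
  by rewrite sumrN oppr_le0 -(lerDl (f x)); exact: fx_le_L.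
apply/eqP; rewrite -oppr_eq0; apply/eqP.
by apply: (psumr_eq0P _ sumN0) => // k _; rewrite oppr_ge0.
Qed.

Lemma primal_dual_optimal_lagrangian_min x' :
  lagrangian f g x lam <= lagrangian f g x' lam.
Proof.
case: opt => _ _ _ _ [fx_le_L _].
rewrite /lagrangian big1 ?addr0 //; last by move=> j _; exact: primal_dual_optimal_slack.
exact: fx_le_L.
Qed.

End Lagrangian.

Lemma primal_dual_optimal_reparam {R : realType} {X X' : Type} {J : finType}
    {f : X -> R} {g : J -> X -> R} {f' : X' -> R} {g' : J -> X' -> R}
    {phi : X -> X'} {x : X} {lam : J -> R} :
  (forall x', exists p, phi p = x') ->
  (forall p, f' (phi p) = f p) -> (forall j p, g' j (phi p) = g j p) ->
  primal_dual_optimal f g x lam -> primal_dual_optimal f' g' (phi x) lam.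
Proof.
move=> phi_onto fE gE [feas fmin lam_ge0 dual_max [fx_le_L fx_inf]].
have LE p mu : lagrangian f' g' (phi p) mu = lagrangian f g p mu.
  by rewrite /lagrangian fE; congr (_ + _); apply: eq_bigr => j _; rewrite gE.
split.
- by move=> j; rewrite gE.
- move=> x'; have [p <-] := phi_onto x' => feas'.
  by rewrite !fE; apply: fmin => j; rewrite -gE.
- exact: lam_ge0.
- move=> mu mu_ge0 t t_le x'; have [p <-] := phi_onto x'.
  by rewrite LE; apply: (dual_max mu mu_ge0) => p'; rewrite -LE.
- split; first by move=> x'; have [p <-] := phi_onto x'; rewrite fE LE.
  by move=> t t_le; rewrite fE; apply: fx_inf => p; rewrite -LE.
Qed.

Section SVMplus.
Context {R : realType} {Z : normedModType R} {ip : Z -> Z -> R} {n d : nat}.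
Context {y : 'I_n -> R} {z : 'I_n -> Z} {xt : 'I_n -> 'cV[R]_d} {C gamma : R}.
Context {alpha beta : 'I_n -> R}.

Local Notation L p :=
  (lagrangian (svmp_obj ip xt C gamma) (svmp_cons ip y z xt) p (mults alpha beta)).

Lemma svmp_lagrangianE w b wt bt :
  L (w, b, wt, bt) =
  2^-1 * ip w w + \sum_(i < n) alpha i * (1 - y i * (ip w (z i) + b))
  + 2^-1 * gamma * dotv wt wt
  + \sum_(i < n) (C - alpha i - beta i) * (dotv wt (xt i) + bt).
Proof.
rewrite /lagrangian big_sumType /= -addrA.
have -> : C * \sum_(i < n) (dotv wt (xt i) + bt)
    + (\sum_(i < n) alpha i * (1 - (dotv wt (xt i) + bt) - y i * (ip w (z i) + b))
       + \sum_(i < n) beta i * - (dotv wt (xt i) + bt))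
  = \sum_(i < n) alpha i * (1 - y i * (ip w (z i) + b))
    + \sum_(i < n) (C - alpha i - beta i) * (dotv wt (xt i) + bt).
  by rewrite mulr_sumr -!big_split; apply: eq_bigr => i _ /=; ring.
ring.
Qed.

Lemma svmp_lagrangian_shift w b (wt v : 'cV[R]_d) bt r t :
  L (w, b, wt + t *: v, bt + t * r) =
  L (w, b, wt, bt)
  + t * (gamma * dotv wt v
         + \sum_(i < n) (C - alpha i - beta i) * (dotv v (xt i) + r))
  + t ^+ 2 * (2^-1 * gamma * dotv v v).
Proof.
rewrite !svmp_lagrangianE dotvDl !dotvDr !dotvZl !dotvZr (dotvC v wt).
have -> : \sum_(i < n) (C - alpha i - beta i) * (dotv (wt + t *: v) (xt i) + (bt + t * r))
  = \sum_(i < n) (C - alpha i - beta i) * (dotv wt (xt i) + bt)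
    + t * \sum_(i < n) (C - alpha i - beta i) * (dotv v (xt i) + r).
  by rewrite mulr_sumr -big_split; apply: eq_bigr => i _ /=; rewrite dotvDl dotvZl; ring.
by field.
Qed.

Lemma svmp_stationary w b wt bt :
  (forall p, L (w, b, wt, bt) <= L p) ->
  forall v r, gamma * dotv wt v
              + \sum_(i < n) (C - alpha i - beta i) * (dotv v (xt i) + r) = 0.
Proof.
move=> L_min v r; apply: (linear_coef_eq0_of_quadratic_ge0 (c := 2^-1 * gamma * dotv v v)).
by move=> t; have := L_min (w, b, wt + t *: v, bt + t * r); rewrite svmp_lagrangian_shift; lra.
Qed.

Context {w : Z} {b : R} {wt : 'cV[R]_d} {bt : R}.
Hypothesis opt : primal_dual_optimal (svmp_obj ip xt C gamma)
  (svmp_cons ip y z xt) (w, b, wt, bt) (mults alpha beta).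

Lemma svmp_opt_stationary v r :
  gamma * dotv wt v
  + \sum_(i < n) (C - alpha i - beta i) * (dotv v (xt i) + r) = 0.
Proof. exact: svmp_stationary w b wt bt (primal_dual_optimal_lagrangian_min opt) v r. Qed.

Lemma svmp_sum_mults : \sum_(i < n) (alpha i + beta i) = C * n%:R.
Proof.
have sum_coef0 : \sum_(i < n) (C - alpha i - beta i) = 0.
  rewrite -[RHS](svmp_opt_stationary 0 1) dotv0r mulr0 add0r.
  by apply: eq_bigr => i _; rewrite dotv0l add0r mulr1.
have : \sum_(i < n) (C - alpha i - beta i)
       = \sum_(i < n) C - \sum_(i < n) (alpha i + beta i).
  by rewrite -sumrB; apply: eq_bigr => i _; rewrite opprD addrA.
by rewrite sum_coef0 sumr_const card_ord mulr_natr => /esym/eqP; rewrite subr_eq0 eq_sym => /eqP.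
Qed.

Lemma svmp_hinge_le_slack i :
  Num.max 0 (1 - y i * (ip w (z i) + b)) <= dotv wt (xt i) + bt.
Proof.
case: opt => feas _ _ _ _; rewrite ge_max; apply/andP; split.
  by have := feas (inr i); rewrite /= oppr_le0.
by have := feas (inl i); rewrite /=; lra.
Qed.

Lemma svmp_mults_slack_hinge i :
  (alpha i + beta i)
  * (dotv wt (xt i) + bt - Num.max 0 (1 - y i * (ip w (z i) + b))) = 0.
Proof.
have := primal_dual_optimal_slack opt (inl i).
have := primal_dual_optimal_slack opt (inr i).
case: opt => feas _ mults_ge0 _ _.
have := mults_ge0 (inl i); have := mults_ge0 (inr i); rewrite /= => beta_ge0 alpha_ge0.
have := svmp_hinge_le_slack i.
have := le_max 0 0 (1 - y i * (ip w (z i) + b)); rewrite lexx /=.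
have := le_max (1 - y i * (ip w (z i) + b)) 0 (1 - y i * (ip w (z i) + b)).
rewrite lexx orbT /=; nra.
Qed.

Lemma svmp_slack_eq_hinge :
  0 < C -> 0 <= gamma ->
  \sum_(i < n) (alpha i + beta i) * Num.max 0 (1 - y i * (ip w (z i) + b))
    = C * \sum_(i < n) Num.max 0 (1 - y i * (ip w (z i) + b)) ->
  (forall i, dotv wt (xt i) + bt = Num.max 0 (1 - y i * (ip w (z i) + b)))
  /\ gamma * dotv wt wt = 0.
Proof.
set s := fun i => dotv wt (xt i) + bt.
set h := fun i => Num.max 0 (1 - y i * (ip w (z i) + b)).
move=> C_gt0 gamma_ge0 sum_h.
have sum_s : \sum_(i < n) (alpha i + beta i) * s i = C * \sum_(i < n) h i.
  rewrite -sum_h; apply: eq_bigr => i _; apply/eqP; rewrite -subr_eq0 -mulrBr.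
  exact/eqP/svmp_mults_slack_hinge.
have balance : gamma * dotv wt wt + C * \sum_(i < n) (s i - h i) = 0.
  rewrite -[RHS](svmp_opt_stationary wt bt); congr (_ + _).
  rewrite sumrB mulrBr -sum_s mulr_sumr -sumrB.
  by apply: eq_bigr => i _; rewrite /s; ring.
have gap_ge0 : 0 <= \sum_(i < n) (s i - h i).
  by apply: sumr_ge0 => i _; rewrite subr_ge0 svmp_hinge_le_slack.
have reg_ge0 : 0 <= gamma * dotv wt wt := mulr_ge0 gamma_ge0 (dotv_ge0 wt).
have Cgap_ge0 := mulr_ge0 (ltW C_gt0) gap_ge0.
have reg0 : gamma * dotv wt wt = 0 by lra.
split=> // i; apply/eqP; rewrite -subr_eq0; apply/eqP.
have /eqP : C * \sum_(i < n) (s i - h i) = 0 by lra.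
rewrite mulf_eq0 gt_eqF //= => /eqP gap0.
by apply: (psumr_eq0P _ gap0) => // k _; rewrite subr_ge0 svmp_hinge_le_slack.
Qed.

Lemma svmp_Xmat_mults_eq0 :
  gamma = 0 -> Xmat xt *m (\col_(i < n) (alpha i + beta i - C)) = 0.
Proof.
move=> gamma0; apply/matrixP => k j; rewrite !mxE.
have := svmp_opt_stationary (delta_mx k 0) 0; rewrite gamma0 mul0r add0r => stat.
transitivity
  (- \sum_(i < n) (C - alpha i - beta i) * (dotv (delta_mx k 0) (xt i) + 0)).
  by rewrite -sumrN; apply: eq_bigr => i _; rewrite !mxE dotv_delta addr0; ring.
by rewrite stat oppr0.
Qed.

End SVMplus.

Theorem proposition4 (R : realType) (Z : completeNormedModType R)
  (ip : Z -> Z -> R) (n d : nat)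
  (y : 'I_n -> R) (z : 'I_n -> Z) (xt : 'I_n -> 'cV[R]_d) (C gamma : R)
  (w : Z) (b : R) (wt : 'cV[R]_d) (bt : R) (alpha beta : 'I_n -> R) :
  is_inner_product ip ->
  (forall i, y i = 1 \/ y i = -1) ->
  0 < C -> 0 <= gamma ->
  primal_dual_optimal (svmp_obj ip xt C gamma) (svmp_cons ip y z xt)
    (w, b, wt, bt) (mults alpha beta) ->
  let h := fun i => Num.max 0 (1 - y i * (ip w (z i) + b)) in
  (\sum_(i < n) (alpha i + beta i) * h i) / (\sum_(i < n) (alpha i + beta i))
    = n%:R^-1 * \sum_(i < n) h i ->
  (forall i, dotv wt (xt i) + bt = h i) /\
  (0 < gamma -> wt = 0 /\ (forall i, bt = h i)) /\
  (gamma = 0 ->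
     Xmat xt *m (\col_(i < n) (alpha i + beta i - C)) = 0 /\
     (\rank (Xmat xt) = n ->
        (forall i, alpha i + beta i = C) /\
        (forall v : 'cV[R]_n, exists (wt' : 'cV[R]_d) (bt' : R),
            forall i, v i 0 = dotv wt' (xt i) + bt') /\
        primal_dual_optimal (svm_obj ip C) (svm_cons ip y z)
          (w, b, fun i => dotv wt (xt i) + bt) (mults alpha beta))).
Proof.
move=> _ _ C_gt0 gamma_ge0 opt h mean_h.
have sum_h := weighted_mean_eq_mean (lt0r_neq0 C_gt0) (svmp_sum_mults opt) mean_h.
have [slackE reg0] := svmp_slack_eq_hinge opt C_gt0 gamma_ge0 sum_h.
split=> //; split.
  move=> gamma_gt0; have wt0 : wt = 0.
    by apply: dotv_eq0; move/eqP: reg0; rewrite mulf_eq0 gt_eqF //= => /eqP.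
  by split=> // i; have := slackE i; rewrite wt0 dotv0l add0r.
move=> gamma0; have XmultsE := svmp_Xmat_mults_eq0 opt gamma0.
split=> // rankX.
have multsE i : alpha i + beta i = C.
  have /matrixP/(_ i 0) := mulmx_rank_col_eq0 rankX XmultsE.
  by rewrite !mxE => /eqP; rewrite subr_eq0 => /eqP.
have onto := Xmat_affine_onto rankX.
split=> //; split=> //.
pose phi (p : Z * R * 'cV[R]_d * R) :=
  let '(w', b', wt', bt') := p in (w', b', fun i => dotv wt' (xt i) + bt').
apply: (primal_dual_optimal_reparam (phi := phi) _ _ _ opt).
- case=> [[w' b'] xi]; have [wt' [bt' xiE]] := onto (\col_i xi i).
  by exists (w', b', wt', bt'); congr (_, _); apply: funext => i; rewrite -xiE mxE.
- by case=> [[[w' b'] wt'] bt']; rewrite /= gamma0 mul0r addr0.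
- by move=> j [[[w' b'] wt'] bt']; case: j.
Qed.
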